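(* Let $H:\mathbb{R}^{2m}\to\mathbb{R}$ be smooth and let $\bar\nabla H$ be any discrete gradient of $H$. Let $\theta$ be a real $2m\times 2m$ matrix of the form $$\theta=\begin{pmatrix}\delta&-\sigma\\ \rho&\delta^T\end{pmatrix},$$ where $\delta,\sigma,\rho$ are $m\times m$ matrices with $\rho^T=-\rho$ and $\sigma^T=-\sigma$, and where $\lim_{h\to0}\theta/h=1$. Then the numerical scheme $$y_{n+1}-y_n=\theta\,S\,\bar\nabla H(y_n,y_{n+1}),\qquad S=\begin{pmatrix}0&1\\-1&0\end{pmatrix},$$ preserves the energy integral exactly: $H(x_{n+1},p_{n+1})=H(x_n,p_n)$.
   Context: Points are written $y=(x,p)\in\mathbb{R}^{2m}$, $y_n=(x_n,p_n)$. $h$ is the time step and $1$ is the identity matrix. A discrete gradient of $H$ is an $\mathbb{R}^{2m}$-valued function $\bar\nabla H(y_n,y_{n+1})$ with components $\Delta H/\Delta y^k$ such that: - $\sum_{k}\frac{\Delta H}{\Delta y^k}(y^k_{n+1}-y^k_n)=H(y_{n+1})-H(y_n)$; - $\bar\nabla H(y,y)=(H_x,H_p)$. *)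

From HB Require Import structures.
From mathcomp Require Import all_boot all_order all_algebra.
From mathcomp Require Import all_classical all_reals all_analysis.
Set Implicit Arguments. Unset Strict Implicit. Unset Printing Implicit Defensive.
Import Order.TTheory GRing.Theory Num.Theory.
Import numFieldNormedType.Exports.
Local Open Scope ring_scope.

(* Points of R^{2m} are column vectors y = col_mx x p : 'cV[R]_(m+m). *)

Fixpoint Dn (R : realType) (n : nat) (vs : seq 'cV[R]_n)
    (f : 'cV[R]_n -> R) : 'cV[R]_n -> R :=
  match vs with
  | [::] => f
  | v :: vs' => fun x => 'D_v (Dn vs' f) x
  end.

Definition smooth (R : realType) (n : nat) (f : 'cV[R]_n -> R) : Prop :=
  forall vs : seq 'cV[R]_n,
    continuous (Dn vs f) /\ forall (x v : 'cV[R]_n), derivable (Dn vs f) x v.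

Definition ebasis (R : realType) (n : nat) (k : 'I_n) : 'cV[R]_n :=
  delta_mx k ord0.

Definition grad (R : realType) (n : nat) (H : 'cV[R]_n -> R) (y : 'cV[R]_n)
  : 'cV[R]_n := \col_k 'D_(ebasis R k) H y.

Definition discrete_gradient (R : realType) (n : nat) (H : 'cV[R]_n -> R)
    (dg : 'cV[R]_n -> 'cV[R]_n -> 'cV[R]_n) : Prop :=
  (forall y y' : 'cV[R]_n,
      \sum_k dg y y' k ord0 * (y' k ord0 - y k ord0) = H y' - H y) /\
  (forall y : 'cV[R]_n, dg y y = grad H y).

Definition Smx (R : realType) (m : nat) : 'M[R]_(m + m) :=
  block_mx 0 1%:M (- 1%:M) 0.

From HB Require Import structures.
From mathcomp Require Import all_boot all_order all_algebra.
From mathcomp Require Import all_classical all_reals all_analysis.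
Import Order.TTheory GRing.Theory Num.Theory.
Import numFieldNormedType.Exports.
Local Open Scope ring_scope.
Local Open Scope classical_set_scope.

(* The energy increment equals the quadratic form g^T (theta S) g of the
   discrete gradient g, and theta S is skew-symmetric; a skew quadratic form
   vanishes. *)

Lemma skew_quad_form0 (R : numDomainType) n (A : 'M[R]_n) (g : 'cV[R]_n) :
  A^T = - A -> (g^T *m A *m g) ord0 ord0 = 0.
Proof.
move=> skewA.
have trN : (g^T *m A *m g)^T = - (g^T *m A *m g).
  by rewrite !trmx_mul trmxK skewA mulNmx mulmxN mulmxA.
have selfN : (g^T *m A *m g) ord0 ord0 = - (g^T *m A *m g) ord0 ord0.
  by have := congr1 (fun M : 'M[R]_1 => M ord0 ord0) trN; rewrite !mxE.
have : (g^T *m A *m g) ord0 ord0 *+ 2 == 0 by rewrite mulr2n {1}selfN addNr.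
by rewrite mulrn_eq0 => /eqP.
Qed.

Lemma discrete_gradient_increment {R : realType} {n} {H : 'cV[R]_n -> R} {dg}
    (y y' : 'cV[R]_n) :
  discrete_gradient H dg -> H y' - H y = ((dg y y')^T *m (y' - y)) ord0 ord0.
Proof.
by move=> [dgE _]; rewrite -dgE mxE; apply: eq_bigr => k _; rewrite !mxE.
Qed.

Lemma discrete_gradient_skew_conserved {R : realType} {n} {H : 'cV[R]_n -> R} {dg}
    {A : 'M[R]_n} {y y' : 'cV[R]_n} :
  discrete_gradient H dg -> A^T = - A -> y' - y = A *m dg y y' -> H y' = H y.
Proof.
move=> dgH skewA step; apply/eqP; rewrite -subr_eq0; apply/eqP.
by rewrite (discrete_gradient_increment _ _ dgH) step mulmxA skew_quad_form0.
Qed.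

Lemma skew_block_mulmxS (R : realType) m (d s r : 'M[R]_m) :
  s^T = - s -> r^T = - r ->
  (block_mx d (- s) r d^T *m Smx R m)^T = - (block_mx d (- s) r d^T *m Smx R m).
Proof.
move=> skew_s skew_r.
rewrite /Smx mulmx_block !mulmx0 !mulmxN !mulmx1 !add0r !addr0 opprK.
have trN : (- d^T)^T = - d by rewrite raddfN /= trmxK.
by rewrite tr_block_mx skew_s skew_r trN opp_block_mx !opprK.
Qed.

Theorem lemma6p5 (R : realType) (m : nat) (H : 'cV[R]_(m + m) -> R)
    (dg : 'cV[R]_(m + m) -> 'cV[R]_(m + m) -> 'cV[R]_(m + m))
    (theta : R -> 'M[R]_(m + m)) (delta sigma rho : R -> 'M[R]_m) :
  smooth H ->
  discrete_gradient H dg ->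
  (forall h, theta h = block_mx (delta h) (- sigma h) (rho h) (delta h)^T) ->
  (forall h, (rho h)^T = - rho h) ->
  (forall h, (sigma h)^T = - sigma h) ->
  (fun h : R => h^-1 *: theta h) @ 0^' --> (1%:M : 'M[R]_(m + m)) ->
  forall (h : R) (yn yn1 : 'cV[R]_(m + m)),
    yn1 - yn = theta h *m Smx R m *m dg yn yn1 ->
    H yn1 = H yn.
Proof.
move=> _ dgH thetaE skew_rho skew_sigma _ h yn yn1 step.
apply: (discrete_gradient_skew_conserved dgH _ step).
by rewrite thetaE skew_block_mulmxS.
Qed.
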